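(* Let $R$ be a commutative ring which is not arithmetic. Then there exist a maximal ideal $P$ of $R$ and elements $a,b\in P$ such that the module $S=\{x\in E_R(R/P)\mid ax=0\text{ and } bx=0\}$ is pure-injective but not RD-injective.
   Context: $R$ is arithmetic if $R_P$ is a valuation ring for every maximal ideal $P$. $E_R(R/P)$ is the injective hull of $R/P$. A short exact sequence $0\to N\to M\to L\to0$ is pure-exact if it remains exact after tensoring with every $R$-module, and RD-exact if $rM\cap N=rN$ for all $r\in R$. A module $F$ is pure-injective (resp. RD-injective) if $\mathrm{Hom}_R(-,F)$ carries every pure-exact (resp. RD-exact) sequence to an exact sequence. *)

From HB Require Import structures.
From mathcomp Require Import all_boot all_order all_algebra.
Set Implicit Arguments. Unset Strict Implicit. Unset Printing Implicit Defensive.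
Import Order.TTheory GRing.Theory Num.Theory.
Local Open Scope ring_scope.

Section Ideals.
Variable R : comPzRingType.

Definition is_ideal (I : R -> Prop) : Prop :=
  [/\ I 0, (forall x y, I x -> I y -> I (x + y)) & (forall r x, I x -> I (r * x))].

Definition is_maximal_ideal (P : R -> Prop) : Prop :=
  [/\ is_ideal P, ~ P 1 &
      forall J : R -> Prop, is_ideal J -> (forall x, P x -> J x) ->
        (forall x, J x -> P x) \/ J 1].

(* Equality in R_P :  x/s = y/t  iff  v (x t - y s) = 0 for some v \notin P. *)
Definition loc_eq (P : R -> Prop) (x s y t : R) : Prop :=
  exists v, ~ P v /\ v * (x * t - y * s) = 0.

(* x/s divides y/t in R_P : (x/s)(z/u) = y/t for some z/u in R_P. *)
Definition loc_dvd (P : R -> Prop) (x s y t : R) : Prop :=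
  exists z u, ~ P u /\ loc_eq P (x * z) (s * u) y t.

(* R_P is a valuation ring: divisibility in R_P is total
   (equivalently, its ideals are totally ordered by inclusion). *)
Definition localization_is_valuation (P : R -> Prop) : Prop :=
  forall x s y t, ~ P s -> ~ P t -> loc_dvd P x s y t \/ loc_dvd P y t x s.

Definition arithmetic : Prop :=
  forall P : R -> Prop, is_maximal_ideal P -> localization_is_valuation P.

End Ideals.

Section Modules.
Variable R : comPzRingType.

Definition is_lin (N M : lmodType R) (f : N -> M) : Prop :=
  forall (r : R) (x y : N), f (r *: x + y) = r *: f x + f y.

Definition short_exact (N M L : lmodType R) (f : N -> M) (g : M -> L) : Prop :=
  [/\ is_lin f, is_lin g, injective f,
      (forall z, exists y, g y = z) &
      (forall y, g y = 0 <-> exists x, y = f x)].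

(* --- Tensor products, built as Free(N x F) / (bilinearity relations). *)
(* A formal R-combination of pairs is a list of (coefficient, (n, f)). *)
Definition fcoef (N F : lmodType R) (s : seq (R * (N * F))) (k : N * F) : R :=
  \sum_(p <- s | p.2 == k) p.1.

Inductive tens_rel (N F : lmodType R) : Type :=
  | RelAddL of N & N & F
  | RelAddR of N & F & F
  | RelScL of R & N & F
  | RelScR of R & N & F.

Definition rel_expand (N F : lmodType R) (g : tens_rel N F) : seq (R * (N * F)) :=
  match g with
  | RelAddL n n' f => [:: (1, (n + n', f)); (-1, (n, f)); (-1, (n', f))]
  | RelAddR n f f' => [:: (1, (n, f + f')); (-1, (n, f)); (-1, (n, f'))]
  | RelScL r n f => [:: (1, (r *: n, f)); (- r, (n, f))]
  | RelScR r n f => [:: (1, (n, r *: f)); (- r, (n, f))]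
  end.

Definition fscale (N F : lmodType R) (c : R) (s : seq (R * (N * F))) :=
  [seq (c * p.1, p.2) | p <- s].

Definition tensor_zero (N F : lmodType R) (s : seq (R * (N * F))) : Prop :=
  exists L : seq (R * tens_rel N F),
    forall k, fcoef s k = fcoef (flatten [seq fscale c.1 (rel_expand c.2) | c <- L]) k.

Definition tensor_eq (N F : lmodType R) (s t : seq (R * (N * F))) : Prop :=
  tensor_zero (s ++ fscale (-1) t).

Definition tmap (N M F : lmodType R) (f : N -> M) (s : seq (R * (N * F))) :
  seq (R * (M * F)) := [seq (p.1, (f p.2.1, p.2.2)) | p <- s].

Definition tensor_exact (N M L F : lmodType R) (f : N -> M) (g : M -> L) : Prop :=
  [/\ (forall s : seq (R * (N * F)), tensor_zero (tmap f s) -> tensor_zero s),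
      (forall t : seq (R * (L * F)), exists s, tensor_eq (tmap g s) t),
      (forall s : seq (R * (N * F)), tensor_zero (tmap g (tmap f s))) &
      (forall s : seq (R * (M * F)), tensor_zero (tmap g s) ->
          exists s', tensor_eq s (tmap f s'))].

Definition pure_exact (N M L : lmodType R) (f : N -> M) (g : M -> L) : Prop :=
  short_exact f g /\ forall F : lmodType R, tensor_exact F f g.

(* rM \cap N = rN, N identified with its image f(N) *)
Definition RD_exact (N M L : lmodType R) (f : N -> M) (g : M -> L) : Prop :=
  short_exact f g /\
  forall (r : R) (m : M),
    ((exists y, m = r *: y) /\ (exists x, m = f x)) <-> (exists x, m = f (r *: x)).

Definition hom_exact (N M L F : lmodType R) (f : N -> M) (g : M -> L) : Prop :=
  [/\ (forall phi : L -> F, is_lin phi -> (forall y, phi (g y) = 0) -> forall z, phi z = 0),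
      (forall phi : L -> F, is_lin phi -> forall x, phi (g (f x)) = 0),
      (forall psi : M -> F, is_lin psi -> (forall x, psi (f x) = 0) ->
          exists phi : L -> F, is_lin phi /\ forall y, psi y = phi (g y)) &
      (forall h : N -> F, is_lin h ->
          exists psi : M -> F, is_lin psi /\ forall x, psi (f x) = h x)].

Definition pure_injective (F : lmodType R) : Prop :=
  forall (N M L : lmodType R) (f : N -> M) (g : M -> L),
    pure_exact f g -> hom_exact F f g.

Definition RD_injective (F : lmodType R) : Prop :=
  forall (N M L : lmodType R) (f : N -> M) (g : M -> L),
    RD_exact f g -> hom_exact F f g.

Definition injective_module (E : lmodType R) : Prop :=
  forall (N M L : lmodType R) (f : N -> M) (g : M -> L),
    short_exact f g -> hom_exact E f g.

(* E is an injective hull of R/P: E is injective, and it contains the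
   submodule R e ~ R/P (ann e = P, the image of 1 + P) as an essential
   submodule: every nonzero cyclic submodule R x meets R e nontrivially. *)
Definition injective_hull_of_quotient (P : R -> Prop) (E : lmodType R) (e : E) : Prop :=
  [/\ injective_module E,
      (forall r : R, r *: e = 0 <-> P r) &
      (forall x : E, x != 0 -> exists r s : R, r *: x != 0 /\ r *: x = s *: e)].

End Modules.

Section Ann2.
Variables (R : comPzRingType) (E : lmodType R) (a b : R).

Definition ann2_pred : {pred E} := [pred x | (a *: x == 0) && (b *: x == 0)].

Lemma ann2_closed : subsemimod_closed ann2_pred.
Proof.
split; first split.
- by rewrite inE !scaler0 eqxx.
- move=> x y; rewrite !inE => /andP[/eqP ax /eqP bx] /andP[/eqP ay /eqP by_].
  by rewrite !scalerDr ax bx ay by_ addr0 eqxx.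
- move=> r x; rewrite !inE => /andP[/eqP ax /eqP bx].
  by rewrite !scalerA [a * r]mulrC [b * r]mulrC -!scalerA ax bx !scaler0 eqxx.
Qed.

HB.instance Definition _ := GRing.isSubmodClosed.Build R E ann2_pred ann2_closed.

Record ann2 := Ann2 { ann2_val :> E; ann2_mem : ann2_val \in ann2_pred }.

HB.instance Definition _ := [isSub for ann2_val].
HB.instance Definition _ := [Choice of ann2 by <:].
HB.instance Definition _ := [SubChoice_isSubLmodule of ann2 by <:].

End Ann2.

(* Take a maximal ideal P such that R_P is not a valuation ring, and a, b in P that
   are incomparable for divisibility in R_P; put I = (a, b), so S = Hom(R/I, E).
   S is pure-injective: for a pure embedding f : N -> M, purity gives
   f(N) /\ IM = f(IN), so a map h : N -> S induces f n + i |-> h n on f(N) + IM,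
   which extends to M by injectivity of E and lands in S since it kills IM.
   S is not RD-injective: x |-> (t x) embeds S RD-purely into the product of the
   annihilators ann_E(r) over the pairs (r, t) with r t in I.  The generator e of
   R/P, which lies in S, becomes divisible by I in that product, because the
   incomparability of a and b makes each equation a u + b v = t e solvable in
   ann_E(r); a retraction would then give e in IS = 0. *)
From HB Require Import structures.
From mathcomp Require Import all_boot all_order all_algebra.
From mathcomp Require Import boolp functions.
From mathcomp Require Import ring.
Set Implicit Arguments. Unset Strict Implicit. Unset Printing Implicit Defensive.
Import GRing.Theory.
Local Open Scope ring_scope.

Lemma scale_regular (R : comPzRingType) (c u : R^o) : c *: u = c * u.
Proof. by []. Qed.

Section Linear.
Variables (R : comPzRingType) (N M : lmodType R) (f : N -> M).
Hypothesis lf : is_lin f.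

Lemma lin0 : f 0 = 0.
Proof.
have := lf 1 0 0; rewrite !scale1r addr0 => /(congr1 (fun z => z - f 0)).
by rewrite /= subrr addrK.
Qed.

Lemma linD x y : f (x + y) = f x + f y.
Proof. by rewrite -{1}[x]scale1r lf scale1r. Qed.

Lemma linZ r x : f (r *: x) = r *: f x.
Proof. by rewrite -[r *: x]addr0 lf lin0 addr0. Qed.

Lemma linB x y : f (x - y) = f x - f y.
Proof. by rewrite linD -scaleN1r linZ scaleN1r. Qed.

End Linear.

Record submod_pred (R : comPzRingType) (V : lmodType R) := SubmodPred {
  sp :> V -> Prop;
  sp0 : sp 0;
  spD : forall x y, sp x -> sp y -> sp (x + y);
  spZ : forall r x, sp x -> sp (r *: x) }.

Section SubmodPredTheory.
Variables (R : comPzRingType) (V : lmodType R) (U : submod_pred V).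

Lemma spN x : U x -> U (- x).
Proof. by move=> Ux; rewrite -scaleN1r; apply: spZ. Qed.

Lemma spB x y : U x -> U y -> U (x - y).
Proof. by move=> Ux Uy; apply: spD => //; apply: spN. Qed.

End SubmodPredTheory.

Section LinImage.
Variables (R : comPzRingType) (N M : lmodType R) (f : N -> M).
Hypothesis lf : is_lin f.

Definition lin_image : submod_pred M.
Proof.
refine (@SubmodPred R M (fun m => exists x, m = f x) _ _ _).
- by exists 0; rewrite (lin0 lf).
- by move=> _ _ [x ->] [y ->]; exists (x + y); rewrite (linD lf).
- by move=> r _ [x ->]; exists (r *: x); rewrite (linZ lf).
Defined.

End LinImage.

Section SubModule.
Variables (R : comPzRingType) (V : lmodType R) (U : submod_pred V).

Definition subpred : {pred V} := fun x => `[< U x >].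

Lemma subpred_closed : subsemimod_closed subpred.
Proof.
split; first split.
- exact/asboolP/sp0.
- by move=> x y /asboolP Ux /asboolP Uy; apply/asboolP; apply: spD.
- by move=> r x /asboolP Ux; apply/asboolP; apply: spZ.
Qed.

HB.instance Definition _ := GRing.isSubmodClosed.Build R V subpred subpred_closed.

Record subm := Subm { subm_val :> V; subm_mem : subm_val \in subpred }.

HB.instance Definition _ := [isSub for subm_val].
HB.instance Definition _ := [Choice of subm by <:].
HB.instance Definition _ := [SubChoice_isSubLmodule of subm by <:].

Lemma submP (x : subm) : U (subm_val x).
Proof. exact/asboolP/subm_mem. Qed.

Definition mksubm (x : V) (Ux : U x) : subm := Subm (asboolT Ux).

End SubModule.

(* The quotient V/U is modelled by the cosets of U, as predicates on V. *)
Section Quotient.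
Variables (R : comPzRingType) (V : lmodType R) (U : submod_pred V).

Definition coset (v : V) : V -> Prop := fun w => U (w - v).

Record quot := Quot { qval : V -> Prop; qprop : exists v, qval = coset v }.
HB.instance Definition _ := gen_eqMixin quot.
HB.instance Definition _ := gen_choiceMixin quot.

Definition qpi (v : V) : quot := @Quot (coset v) (ex_intro _ v erefl).
Definition qrepr (q : quot) : V := projT1 (cid (qprop q)).

Lemma quot_ext (q1 q2 : quot) : qval q1 = qval q2 -> q1 = q2.
Proof.
case: q1 q2 => v1 p1 [v2 p2] /= e; subst v2.
by rewrite (Prop_irrelevance p1 p2).
Qed.

Lemma qpi_eq v w : qpi v = qpi w <-> U (v - w).
Proof.
split.
- move=> /(congr1 qval) /= e.
  have : coset v v by rewrite /coset subrr; apply: sp0.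
  by rewrite e.
- move=> Uvw; apply: quot_ext => /=; apply: funext => x; apply: propext.
  rewrite /coset; split => H.
  + by have := spD H Uvw; rewrite addrA subrK.
  + by have := spB H Uvw; rewrite opprB addrA subrK.
Qed.

Lemma qreprK q : qpi (qrepr q) = q.
Proof. by rewrite /qrepr; case: (cid _) => v /= e; apply: quot_ext; rewrite e. Qed.

Lemma qrepr_pi v : U (qrepr (qpi v) - v).
Proof. by apply/qpi_eq; rewrite qreprK. Qed.

Lemma qind (P : quot -> Prop) : (forall v, P (qpi v)) -> forall q, P q.
Proof. by move=> H q; rewrite -(qreprK q). Qed.

Definition qadd (q1 q2 : quot) := qpi (qrepr q1 + qrepr q2).
Definition qopp (q : quot) := qpi (- qrepr q).
Definition qscale (r : R) (q : quot) := qpi (r *: qrepr q).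

Lemma qaddE v w : qadd (qpi v) (qpi w) = qpi (v + w).
Proof. by apply/qpi_eq; have := spD (qrepr_pi v) (qrepr_pi w); rewrite opprD addrACA. Qed.

Lemma qoppE v : qopp (qpi v) = qpi (- v).
Proof. by apply/qpi_eq; have := spN (qrepr_pi v); rewrite opprB opprK addrC. Qed.

Lemma qscaleE r v : qscale r (qpi v) = qpi (r *: v).
Proof. by apply/qpi_eq; have := spZ r (qrepr_pi v); rewrite scalerBr. Qed.

Lemma qaddA : associative qadd.
Proof. by elim/qind=> x; elim/qind=> y; elim/qind=> z; rewrite !qaddE addrA. Qed.
Lemma qaddC : commutative qadd.
Proof. by elim/qind=> x; elim/qind=> y; rewrite !qaddE addrC. Qed.
Lemma qadd0 : left_id (qpi 0) qadd.
Proof. by elim/qind=> x; rewrite qaddE add0r. Qed.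
Lemma qaddN : left_inverse (qpi 0) qopp qadd.
Proof. by elim/qind=> x; rewrite qoppE qaddE addNr. Qed.

HB.instance Definition _ := GRing.isZmodule.Build quot qaddA qaddC qadd0 qaddN.

Lemma qscaleA a b v : qscale a (qscale b v) = qscale (a * b) v.
Proof. by elim/qind: v => x; rewrite !qscaleE scalerA. Qed.
Lemma qscale1 : left_id 1 qscale.
Proof. by elim/qind=> x; rewrite qscaleE scale1r. Qed.
Lemma qscaleDr : right_distributive qscale qadd.
Proof. by move=> r; elim/qind=> x; elim/qind=> y; rewrite !(qaddE, qscaleE) scalerDr. Qed.
Lemma qscaleDl v : {morph qscale^~ v : a b / a + b >-> qadd a b}.
Proof. by move=> a b; elim/qind: v => x; rewrite !(qaddE, qscaleE) scalerDl. Qed.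

HB.instance Definition _ :=
  GRing.Zmodule_isLmodule.Build R quot qscaleA qscale1 qscaleDr qscaleDl.

Lemma qpi_lin : is_lin qpi.
Proof.
move=> r x y; have -> : r *: qpi x = qpi (r *: x) := qscaleE r x.
by have -> : qpi (r *: x) + qpi y = qpi (r *: x + y) := qaddE _ _.
Qed.

Lemma qpi0 v : qpi v = 0 <-> U v.
Proof. by rewrite -[0]/(qpi 0) qpi_eq subr0. Qed.

Lemma qpi_surj (q : quot) : exists v, qpi v = q.
Proof. by exists (qrepr q); rewrite qreprK. Qed.

End Quotient.

Section Exactness.
Variable R : comPzRingType.

Lemma sub_quot_exact (V : lmodType R) (U : submod_pred V) :
  short_exact (@subm_val R V U) (@qpi R V U).
Proof.
split=> //; [exact: qpi_lin | exact: val_inj | exact: qpi_surj |].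
move=> y; rewrite qpi0; split; first by move=> Uy; exists (mksubm Uy).
by case=> x ->; apply: submP.
Qed.

Lemma image_quot_exact (N M : lmodType R) (f : N -> M) (lf : is_lin f) :
  injective f -> short_exact f (@qpi R M (lin_image lf)).
Proof.
move=> injf; split=> //; [exact: qpi_lin | exact: qpi_surj |].
by move=> y; rewrite qpi0.
Qed.

Lemma hom_exact_from_extension (N M L F : lmodType R) (f : N -> M) (g : M -> L) :
  short_exact f g ->
  (forall h : N -> F, is_lin h ->
     exists psi : M -> F, is_lin psi /\ forall x, psi (f x) = h x) ->
  hom_exact F f g.
Proof.
move=> [lf lg injf surjg exg] extend; split => //.
- by move=> phi lphi H z; have [y <-] := surjg z; apply: H.
- move=> phi lphi x; have -> : g (f x) = 0 by apply/exg; exists x.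
  exact: lin0.
- move=> psi lpsi psi_f.
  have psi_g y y' : g y = g y' -> psi y = psi y'.
    move=> eg; have : g (y - y') = 0 by rewrite (linB lg) eg subrr.
    case/exg=> x exy; apply/eqP; rewrite -subr_eq0 -(linB lpsi) exy psi_f //.
  pose sec z := projT1 (cid (surjg z)).
  have secK z : g (sec z) = z by rewrite /sec; case: (cid _).
  exists (fun z => psi (sec z)); split.
  + move=> r z z'; rewrite -(linZ lpsi) -(linD lpsi); apply: psi_g.
    by rewrite (linD lg) (linZ lg) !secK.
  + by move=> y; apply: psi_g; rewrite secK.
Qed.

Lemma injective_extend (E X V : lmodType R) (gen : X -> V) (val : X -> E) :
  injective_module E -> is_lin gen -> is_lin val -> (forall x, gen x = 0 -> val x = 0) ->
  exists psi : V -> E, is_lin psi /\ forall x, psi (gen x) = val x.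
Proof.
move=> hE lgen lval ker_val.
have val_gen x y : gen x = gen y -> val x = val y.
  move=> exy; apply/eqP; rewrite -subr_eq0 -(linB lval); apply/eqP/ker_val.
  by rewrite (linB lgen) exy subrr.
pose U := lin_image lgen.
pose pre (s : subm U) := projT1 (cid (submP s)).
have preK s : subm_val s = gen (pre s) by rewrite /pre; case: (cid _).
have [_ _ _ ext] := hE _ _ _ _ _ (sub_quot_exact U).
have [|psi [lpsi psiE]] := ext (fun s => val (pre s)).
  move=> r s s'; rewrite -(linZ lval) -(linD lval); apply: val_gen.
  by rewrite -preK (linD lgen) (linZ lgen) -!preK.
exists psi; split => // x; have Ux : U (gen x) by exists x.
by rewrite (psiE (mksubm Ux)); apply: val_gen; rewrite -preK.
Qed.

End Exactness.

Section Span2.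
Variables (R : comPzRingType) (a b : R).

Definition span2 (N : lmodType R) : submod_pred N.
Proof.
refine (@SubmodPred R N (fun x => exists n1 n2, x = a *: n1 + b *: n2) _ _ _).
- by exists 0, 0; rewrite !scaler0 addr0.
- move=> _ _ [n1 [n2 ->]] [n1' [n2' ->]].
  by exists (n1 + n1'), (n2 + n2'); rewrite !scalerDr addrACA.
- move=> r _ [n1 [n2 ->]]; exists (r *: n1), (r *: n2).
  by rewrite scalerDr !scalerA mulrC [r * b]mulrC.
Defined.

Lemma span2_scale (N : lmodType R) (c : R^o) (x : N) : span2 R^o c -> span2 N (c *: x).
Proof. by case=> al [be ->]; exists (al *: x), (be *: x); rewrite scalerDl !scalerA. Qed.

Lemma ann2P (E : lmodType R) (s : ann2 E a b) : a *: (s : E) = 0 /\ b *: (s : E) = 0.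
Proof. by have := ann2_mem s; rewrite inE => /andP[/eqP -> /eqP ->]. Qed.

Definition mkann2 (E : lmodType R) (x : E) (ha : a *: x = 0) (hb : b *: x = 0) : ann2 E a b.
Proof. by refine (@Ann2 R E a b x _); rewrite inE ha hb eqxx. Defined.

Lemma lin_ann2_span2 (N E : lmodType R) (h : N -> ann2 E a b) (x : N) :
  is_lin h -> span2 N x -> h x = 0.
Proof.
move=> lh [n1 [n2 ->]]; apply: val_inj.
by rewrite (linD lh) !(linZ lh) /= (ann2P (h n1)).1 (ann2P (h n2)).2 addr0.
Qed.

Definition quot_span2 := quot (span2 R^o).
Definition one_I : quot_span2 := qpi (span2 R^o) 1.

Lemma scale_one_I (c : R) : span2 R^o c -> c *: one_I = 0.
Proof.
move=> Ic; rewrite /one_I -[c *: _]/(qscale c _) qscaleE; apply/qpi0.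
by rewrite [_ *: _]mulr1.
Qed.


Lemma fcoef_cons (N F : lmodType R) (p : R * (N * F)) s k :
  fcoef (p :: s) k = (p.2 == k)%:R * p.1 + fcoef s k.
Proof. by rewrite /fcoef big_cons; case: ifP; rewrite ?mul1r ?mul0r ?add0r. Qed.

Lemma fcoef_nil (N F : lmodType R) k : fcoef (N := N) (F := F) [::] k = 0.
Proof. by rewrite /fcoef big_nil. Qed.

(* A formal sum of tensors n (x) q in N (x) R/(a,b) is evaluated to N, picking a
   representative of each q; the value is well defined modulo (a,b)N. *)
Section TensorEval.
Variable N : lmodType R.

Definition teval_term (k : N * quot_span2) : N := qrepr k.2 *: k.1.
Definition teval (s : seq (R * (N * quot_span2))) : N := \sum_(p <- s) p.1 *: teval_term p.2.

Lemma teval_cat s t : teval (s ++ t) = teval s + teval t.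
Proof. by rewrite /teval big_cat. Qed.

Lemma teval_fscale c s : teval (fscale c s) = c *: teval s.
Proof. by rewrite /teval big_map scaler_sumr; apply: eq_bigr => p _; rewrite scalerA. Qed.

Lemma teval_support s A : uniq A -> {subset map snd s <= A} ->
  teval s = \sum_(k <- A) fcoef s k *: teval_term k.
Proof.
move=> uA; elim: s => [|p s IH] sA.
  by rewrite /teval big_nil big1_seq // => k _; rewrite fcoef_nil scale0r.
have pA : p.2 \in A by apply: sA; rewrite inE eqxx.
rewrite /teval big_cons -/(teval s) IH => [|k ks]; last by apply: sA; rewrite inE ks orbT.
under [RHS]eq_bigr => k _ do rewrite fcoef_cons scalerDl.
rewrite big_split /=; congr (_ + _).
rewrite (big_rem _ pA) /= eqxx mul1r big1_seq ?addr0 // => k /andP[_ kA].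
by case: eqP kA => [<-|_ _]; rewrite ?mem_rem_uniqF // mul0r scale0r.
Qed.

Lemma teval_fcoef s t : (forall k, fcoef s k = fcoef t k) -> teval s = teval t.
Proof.
move=> st; have uA := undup_uniq (map snd (s ++ t)).
rewrite (teval_support (s := s) uA) => [|k ks]; last by rewrite mem_undup map_cat mem_cat ks.
rewrite (teval_support (s := t) uA) => [|k ks]; last by rewrite mem_undup map_cat mem_cat ks orbT.
by apply: eq_bigr => k _; rewrite st.
Qed.

Lemma teval_rel (g : tens_rel N quot_span2) : span2 N (teval (rel_expand g)).
Proof.
case: g => [n n' q|n q q'|r n q|r n q]; rewrite [rel_expand _]/= /teval !big_cons big_nil /teval_term [_.1]/= [_.2]/=.
- by rewrite addr0 scale1r !scaleN1r scalerDr addrACA !subrr addr0; apply: sp0.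
- rewrite addr0 scale1r !scaleN1r addrA -!scalerBl; apply: span2_scale.
  have : qpi (span2 R^o) (qrepr (q + q')) = qpi (span2 R^o) (qrepr q + qrepr q').
    by rewrite qreprK -qaddE !qreprK.
  by move/qpi_eq; rewrite opprD addrA.
- by rewrite addr0 scale1r !scalerA mulNr scaleNr [qrepr q * r]mulrC subrr; apply: sp0.
- rewrite addr0 scale1r scaleNr scalerA -scalerBl; apply: span2_scale.
  have : qpi (span2 R^o) (qrepr (r *: q)) = qpi (span2 R^o) (r * qrepr q).
    by rewrite qreprK -[r * _]/(r *: (qrepr q : R^o)) -qscaleE qreprK.
  by move/qpi_eq.
Qed.

Lemma teval_tensor_zero s : tensor_zero s -> span2 N (teval s).
Proof.
case=> L sL; rewrite (teval_fcoef sL); elim: L {sL} => [|c L IH].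
  by rewrite /teval big_nil; apply: sp0.
by rewrite [flatten _]/= teval_cat teval_fscale; apply: spD => //; apply/spZ/teval_rel.
Qed.

Lemma tensor_zero_one_I (n : N) : tensor_zero [:: (1, (n, one_I))] -> span2 N n.
Proof.
move=> /teval_tensor_zero; rewrite /teval big_cons big_nil addr0 scale1r /teval_term.
move=> /spB /(_ (span2_scale n (qrepr_pi (span2 R^o) (1 : R^o)))).
by rewrite -scalerBl opprB addrC subrK scale1r.
Qed.

End TensorEval.

Lemma tensor_zero_span2_one_I (M : lmodType R) (m1 m2 : M) :
  tensor_zero [:: (1, (a *: m1 + b *: m2, one_I))].
Proof.
have ha : a *: one_I = 0.
  by apply: scale_one_I; exists 1, 0; rewrite scaler0 addr0; exact: (esym (mulr1 a)).
have hb : b *: one_I = 0.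
  by apply: scale_one_I; exists 0, 1; rewrite scaler0 add0r; exact: (esym (mulr1 b)).
exists [:: (1, RelAddL (a *: m1) (b *: m2) one_I); (1, RelScL a m1 one_I);
  (1, RelScL b m2 one_I); (-1, RelScR a m1 one_I); (-1, RelScR b m2 one_I);
  (1, RelScR 0 m1 one_I); (1, RelScR 0 m2 one_I)].
move=> k /=; rewrite ha hb scale0r !fcoef_cons !fcoef_nil /=.
ring.
Qed.

Lemma pure_exact_span2 (N M L : lmodType R) (f : N -> M) (g : M -> L) (n : N) :
  pure_exact f g -> span2 M (f n) -> span2 N n.
Proof.
move=> [_ tensor_ex] [m1 [m2 fn]]; have [inj_tensor _ _ _] := tensor_ex quot_span2.
by apply/tensor_zero_one_I/inj_tensor; rewrite /tmap /= fn; apply: tensor_zero_span2_one_I.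
Qed.

End Span2.

Lemma addr3ACA (V : nmodType) (x y z x' y' z' : V) :
  (x + y + z) + (x' + y' + z') = (x + x') + (y + y') + (z + z').
Proof. by rewrite addrACA [x + y + _]addrACA. Qed.

Section PureInjective.
Variables (R : comPzRingType) (a b : R) (E : lmodType R).
Hypothesis hE : injective_module E.

Lemma pure_injective_ann2 : pure_injective (ann2 E a b).
Proof.
move=> N M L f g hp; have [lf _ _ _ _] := hp.1.
apply: hom_exact_from_extension => [|h lh]; first exact: hp.1.
pose gen (x : N * M * M) := f x.1.1 + a *: x.1.2 + b *: x.2.
have lgen : is_lin gen.
  move=> r [[n m1] m2] [[n' m1'] m2']; rewrite /gen /= lf !scalerDr [RHS]addr3ACA.
  by rewrite !scalerA [r * a]mulrC [r * b]mulrC.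
have lval : is_lin (fun x : N * M * M => h x.1.1 : E) by move=> r x y; rewrite /= lh.
have [|psi [lpsi psiE]] := injective_extend hE lgen lval.
  move=> [[n m1] m2]; rewrite /gen /= => gen0.
  have /(pure_exact_span2 hp) /(lin_ann2_span2 lh) -> // : span2 a b M (f n).
  exists (- m1), (- m2); rewrite !scalerN -opprD.
  by rewrite -[f n](addrK (a *: m1 + b *: m2)) addrA gen0 sub0r.
have gen_a m : gen (0, m, 0) = a *: m by rewrite /gen /= (lin0 lf) scaler0 add0r addr0.
have gen_b m : gen (0, 0, m) = b *: m by rewrite /gen /= (lin0 lf) scaler0 !add0r.
have gen_f n : gen (n, 0, 0) = f n by rewrite /gen /= !scaler0 !addr0.
have psi_a m : a *: psi m = 0 by rewrite -(linZ lpsi) -gen_a psiE /= (lin0 lh).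
have psi_b m : b *: psi m = 0 by rewrite -(linZ lpsi) -gen_b psiE /= (lin0 lh).
exists (fun m => mkann2 (psi_a m) (psi_b m)); split.
- by move=> r x y; apply: val_inj; rewrite /= lpsi.
- by move=> n; apply: val_inj; rewrite /= -gen_f psiE.
Qed.

End PureInjective.

Section MaximalIdeal.
Variables (R : comPzRingType) (P : R -> Prop).
Hypothesis hP : is_maximal_ideal P.

Lemma maximal_idealD x y : P x -> P y -> P (x + y).
Proof. by case: hP => -[_ PD _] _ _; apply: PD. Qed.

Lemma maximal_idealM r x : P x -> P (r * x).
Proof. by case: hP => -[_ _ PM] _ _; apply: PM. Qed.

Lemma maximal_idealN x : P x -> P (- x).
Proof. by rewrite -mulN1r; apply: maximal_idealM. Qed.

Lemma maximal_ideal_N1 : ~ P 1.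
Proof. by case: hP. Qed.

Lemma maximal_ideal_prime x y : ~ P x -> ~ P y -> ~ P (x * y).
Proof.
move=> nx ny Pxy; pose J z := exists r p, P p /\ z = r * x + p.
have hJ : is_ideal J.
  split.
  - by exists 0, 0; rewrite mul0r addr0; split=> //; case: hP => -[].
  - move=> _ _ [r1 [p1 [P1 ->]]] [r2 [p2 [P2 ->]]].
    by exists (r1 + r2), (p1 + p2); rewrite mulrDl addrACA; split=> //; apply: maximal_idealD.
  - move=> r _ [r1 [p1 [P1 ->]]]; exists (r * r1), (r * p1).
    by rewrite mulrDr mulrA; split=> //; apply: maximal_idealM.
case: hP => _ _ /(_ J hJ) [].
- by move=> p Pp; exists 0, p; rewrite mul0r add0r.
- by move=> PJ; apply/nx/PJ; exists 1, 0; rewrite mul1r addr0; split=> //; case: hP => -[].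
- move=> [r [p [Pp e1]]]; apply: ny.
  have -> : y = r * (x * y) + y * p by rewrite mulrA [y * p]mulrC -mulrDl -e1 mul1r.
  by apply: maximal_idealD; apply: maximal_idealM.
Qed.

Lemma maximal_ideal_addr w z : ~ P w -> P (w + z) -> ~ P z.
Proof.
move=> nw Pwz Pz; apply: nw.
by rewrite -(addrK z w); apply: maximal_idealD => //; apply: maximal_idealN.
Qed.

End MaximalIdeal.

Section LocalDivisibility.
Variables (R : comPzRingType) (P : R -> Prop).
Hypothesis hP : is_maximal_ideal P.

(* [x] does not divide [y] in the localization R_P. *)
Definition loc_ndvd (x y : R) := forall u c, ~ P u -> u * y <> c * x.

Lemma not_loc_dvd x s y t : ~ P s -> ~ P t -> ~ loc_dvd P x s y t -> loc_ndvd x y.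
Proof.
move=> ns nt ndvd u c nu uy; apply: ndvd; exists (c * s), (u * t).
split; first exact: maximal_ideal_prime.
exists 1; split; first exact: maximal_ideal_N1.
have -> : 1 * (x * (c * s) * t - y * (s * (u * t))) = s * t * (c * x - u * y) by ring.
by rewrite uy subrr mulr0.
Qed.

Lemma loc_ndvd_mem x y : loc_ndvd x y -> P x.
Proof. by move=> nxy; apply: contrapT => nx; apply: (nxy x y nx); rewrite mulrC. Qed.

End LocalDivisibility.

Section Ann2Divisibility.
Variables (R : comPzRingType) (a b : R) (E : lmodType R).
Hypothesis hE : injective_module E.

Lemma ann2_span2_scale (s : ann2 E a b) (c : R^o) : span2 a b R^o c -> c *: (s : E) = 0.
Proof.
case=> al [be ->]; rewrite scalerDl -[a *: al]/(a * al) -[b *: be]/(b * be).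
by rewrite [a * al]mulrC [b * be]mulrC -!scalerA (ann2P s).1 (ann2P s).2 !scaler0 addr0.
Qed.

Lemma injective_ann2_div (r : R) (x : E) :
  (forall t, span2 a b R^o (r * t) -> t *: x = 0) -> exists s : ann2 E a b, r *: (s : E) = x.
Proof.
move=> hx; pose gen (p : R^o * R^o * R^o) : R^o := r * p.1.1 + p.1.2 * a + p.2 * b.
have lgen : is_lin gen.
  by move=> c [[t al] be] [[t' al'] be']; rewrite /gen /= !scale_regular; ring.
have lval : is_lin (fun p : R^o * R^o * R^o => p.1.1 *: x).
  by move=> c [[t al] be] [[t' al'] be']; rewrite /= scalerDl scalerA.
have [|psi [lpsi psiE]] := injective_extend hE lgen lval.
  move=> [[t al] be]; rewrite /gen /= => gen0; apply: hx; exists (- al), (- be).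
  rewrite -[r * t](addrK (al * a + be * b)) addrA gen0 /GRing.scale /=; ring.
have psi_r : psi r = x.
  by have := psiE (1, 0, 0); rewrite scale1r /gen /= mulr1 !mul0r !addr0.
have psi_a : psi a = 0.
  by have := psiE (0, 1, 0); rewrite scale0r /gen /= mulr0 mul1r mul0r add0r addr0.
have psi_b : psi b = 0.
  by have := psiE (0, 0, 1); rewrite scale0r /gen /= mulr0 !mul0r mul1r !add0r.
have psi_scale (c : R^o) : psi c = c *: psi 1.
  by rewrite -(linZ lpsi); congr psi; rewrite /GRing.scale /= mulr1.
have ha : a *: psi 1 = 0 by rewrite -psi_scale.
have hb : b *: psi 1 = 0 by rewrite -psi_scale.
by exists (mkann2 ha hb); rewrite /= -psi_scale.
Qed.

(* [ann_prod] is the product of the annihilators ann_E(r) indexed by the pairs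
   j = (r, t); on the factor j with r t in (a,b), [ann2_embed] is multiplication by t.
   Its RD-purity is exactly the divisibility property [injective_ann2_div]. *)
Definition ann_family : submod_pred (R * R -> E).
Proof.
refine (@SubmodPred R (R * R -> E) (fun f => forall j, j.1 *: f j = 0) _ _ _).
- by move=> j; rewrite scaler0.
- by move=> f g hf hg j; rewrite /= scalerDr hf hg addr0.
- by move=> c f hf j; rewrite /= scalerA mulrC -scalerA hf scaler0.
Defined.

Definition ann_prod := subm ann_family.

Definition ann2_embed_fun (x : E) (j : R * R) : E :=
  if `[< span2 a b R^o (j.1 * j.2) >] then j.2 *: x else 0.

Lemma ann2_embed_mem (x : ann2 E a b) : ann_family (ann2_embed_fun x).
Proof.
move=> j; rewrite /ann2_embed_fun; case: asboolP => [Ij|_]; last by rewrite scaler0.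
by rewrite scalerA; apply: ann2_span2_scale.
Qed.

Definition ann2_embed (x : ann2 E a b) : ann_prod := mksubm (ann2_embed_mem x).

Lemma ann2_embed_lin : is_lin ann2_embed.
Proof.
move=> r x y; apply: val_inj; apply: funext => j.
transitivity (r *: ann2_embed_fun x j + ann2_embed_fun y j); last by [].
rewrite /= /ann2_embed_fun; case: asboolP => _; last by rewrite scaler0 addr0.
by rewrite scalerDr !scalerA mulrC.
Qed.

Lemma ann2_embed_inj : injective ann2_embed.
Proof.
move=> x y /(congr1 (fun z : ann_prod => subm_val z (0, 1))).
rewrite /= /ann2_embed_fun asboolT; last by rewrite mul0r; apply: sp0.
by rewrite !scale1r => /val_inj.
Qed.

Lemma ann2_embed_RD_exact :
  RD_exact ann2_embed (qpi (lin_image ann2_embed_lin)).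
Proof.
split; first exact: image_quot_exact ann2_embed_inj.
move=> r m; split.
- move=> [[z mz] [x mx]].
  have [s rs] : exists s : ann2 E a b, r *: (s : E) = x :> E.
    apply: injective_ann2_div => t Irt.
    have := congr1 (fun w : ann_prod => subm_val w (r, t)) (etrans (esym mx) mz).
    by rewrite /= /ann2_embed_fun asboolT // => ->; apply: (submP z (r, t)).
  by exists s; rewrite mx; congr ann2_embed; apply: val_inj.
- move=> [x ->]; split; last by exists (r *: x).
  by exists (ann2_embed x); rewrite (linZ ann2_embed_lin).
Qed.

End Ann2Divisibility.

Section NotRDInjective.
Variables (R : comPzRingType) (P : R -> Prop) (a b : R).
Hypothesis hP : is_maximal_ideal P.
Hypotheses (hab : loc_ndvd P a b) (hba : loc_ndvd P b a).

(* If m1 y were a unit of R_P, the two relations would make one of a, b divide the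
   other in R_P. *)
Lemma relation_coef_mem r y al be m1 m2 m3 : r * y = al * a + be * b ->
  m1 * a + m2 * r = 0 -> m1 * b + m3 * r = 0 -> P (m1 * y).
Proof.
move=> ry rel_a rel_b; apply: contrapT => nm1y.
have eq_a : (m1 * y + m2 * al) * a = - (m2 * be) * b.
  apply/eqP; rewrite -subr_eq0; apply/eqP.
  have -> : (m1 * y + m2 * al) * a - - (m2 * be) * b =
    y * (m1 * a + m2 * r) - m2 * (r * y - (al * a + be * b)) by ring.
  by rewrite rel_a ry subrr !mulr0 subr0.
have eq_b : (m1 * y + m3 * be) * b = - (m3 * al) * a.
  apply/eqP; rewrite -subr_eq0; apply/eqP.
  have -> : (m1 * y + m3 * be) * b - - (m3 * al) * a =
    y * (m1 * b + m3 * r) - m3 * (r * y - (al * a + be * b)) by ring.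
  by rewrite rel_b ry subrr !mulr0 subr0.
have P_a : P (m1 * y + m2 * al) by apply: contrapT => H; exact: hba H eq_a.
have P_b : P (m1 * y + m3 * be) by apply: contrapT => H; exact: hab H eq_b.
have nal : ~ P al.
  by move=> Pal; apply: (maximal_ideal_addr hP nm1y P_a); apply: maximal_idealM.
have nm3 : ~ P m3.
  by move=> Pm3; apply: (maximal_ideal_addr hP nm1y P_b); rewrite mulrC; apply: maximal_idealM.
apply: (hba _ (esym eq_b)) => /(maximal_idealN hP); rewrite opprK.
exact: maximal_ideal_prime.
Qed.

Variables (E : lmodType R) (e : E).
Hypothesis hE : injective_module E.
Hypothesis ann_e : forall r : R, r *: e = 0 <-> P r.

Lemma span2_ann_decomp r y al be : r * y = al * a + be * b -> ~ P y ->
  exists u v : E, [/\ r *: u = 0, r *: v = 0 & a *: u + b *: v = y *: e].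
Proof.
move=> ry ny; pose gen (l : R^o * R^o * R^o) : R^o * R^o :=
  (l.1.1 * a + l.1.2 * r, l.1.1 * b + l.2 * r).
have lgen : is_lin gen.
  move=> c [[l1 l2] l3] [[k1 k2] k3]; rewrite /gen /= !scale_regular.
  by congr (_, _); rewrite /= ?scale_regular; ring.
pose val (l : R^o * R^o * R^o) := l.1.1 *: (y *: e).
have lval : is_lin val by move=> c [[l1 l2] l3] [[k1 k2] k3]; rewrite /val /= scalerDl [in RHS]scalerA.
have [|psi [lpsi psiE]] := injective_extend hE lgen lval.
  move=> [[l1 l2] l3] gen0; have rel_a := congr1 fst gen0; have rel_b := congr1 snd gen0.
  rewrite /val /= scalerA; apply/ann_e; exact: relation_coef_mem ry rel_a rel_b.
have pairE (c : R) (l1 l2 : R^o) : c *: ((l1, l2) : R^o * R^o) = (c * l1, c * l2) by [].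
have psi_gen (l1 l2 l3 : R^o) z : z = gen (l1, l2, l3) -> psi z = l1 *: (y *: e).
  by move=> ->; rewrite psiE.
exists (psi (1, 0)), (psi (0, 1)); split.
- rewrite -(linZ lpsi) pairE (psi_gen 0 1 0) ?scale0r // /gen /=; congr (_, _); ring.
- rewrite -(linZ lpsi) pairE (psi_gen 0 0 1) ?scale0r // /gen /=; congr (_, _); ring.
- rewrite -!(linZ lpsi) -(linD lpsi) !pairE (psi_gen 1 0 0) ?scale1r // /gen /=.
  by congr (_, _); rewrite /=; ring.
Qed.


Lemma ann2_embed_span2 (ea : a *: e = 0) (eb : b *: e = 0) :
  span2 a b (ann_prod E) (ann2_embed (mkann2 ea eb)).
Proof.
have decomp j : exists uv : E * E,
    [/\ j.1 *: uv.1 = 0, j.1 *: uv.2 = 0 & a *: uv.1 + b *: uv.2 = ann2_embed_fun a b e j].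
  case: j => r y; rewrite /ann2_embed_fun /=.
  case: asboolP => [[al [be]]|_]; last by exists (0, 0); rewrite /= !scaler0 addr0.
  rewrite !scale_regular [a * al]mulrC [b * be]mulrC => ry.
  case: (pselect (P y)) => [Py|ny]; last first.
    by have [u [v [ru rv uv]]] := span2_ann_decomp ry ny; exists (u, v).
  by exists (0, 0); rewrite /= !scaler0 addr0; split=> //; symmetry; apply/ann_e.
have [uv uvP] := choice decomp.
have u_mem : ann_family E (fun j => (uv j).1) by move=> j; case: (uvP j).
have v_mem : ann_family E (fun j => (uv j).2) by move=> j; case: (uvP j).
exists (mksubm u_mem), (mksubm v_mem); apply: val_inj; apply: funext => j /=.
by case: (uvP j).
Qed.

Lemma not_RD_injective_ann2 : ~ RD_injective (ann2 E a b).
Proof.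
move=> hRD; have [_ _ _ ext] := hRD _ _ _ _ _ (ann2_embed_RD_exact a b hE).
have [psi [lpsi psiE]] := ext id (fun r x y => erefl).
have ea : a *: e = 0 by apply/ann_e/(loc_ndvd_mem hab).
have eb : b *: e = 0 by apply/ann_e/(loc_ndvd_mem hba).
have := psiE (mkann2 ea eb); rewrite (lin_ann2_span2 lpsi (ann2_embed_span2 ea eb)).
move=> /(congr1 (@ann2_val _ _ _ _)) /= e0.
by apply: (maximal_ideal_N1 hP); apply/ann_e; rewrite -e0 scale1r.
Qed.

End NotRDInjective.

Lemma not_arithmetic_incomparable (R : comPzRingType) : ~ arithmetic R ->
  exists (P : R -> Prop) (a b : R), [/\ is_maximal_ideal P, loc_ndvd P a b & loc_ndvd P b a].
Proof.
move=> nar.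
have [P [hP nval]] : exists P : R -> Prop, is_maximal_ideal P /\ ~ localization_is_valuation P.
  by apply: contrapT => nex; apply: nar => P hP; apply: contrapT => nval; apply: nex; exists P.
have [x [s [y [t [ns nt nxy nyx]]]]] : exists x s y t,
    [/\ ~ P s, ~ P t, ~ loc_dvd P x s y t & ~ loc_dvd P y t x s].
  apply: contrapT => nex; apply: nval => x s y t ns nt; apply: contrapT => ndvd.
  by apply: nex; exists x, s, y, t; split=> // dvd; apply: ndvd; [left | right].
by exists P, x, y; split; [| exact: (not_loc_dvd hP ns nt nxy) | exact: (not_loc_dvd hP nt ns nyx)].
Qed.

Unset Implicit Arguments.

Theorem proposition4p2 (R : comPzRingType) :
  ~ arithmetic R ->
  exists (P : R -> Prop) (a b : R),
    [/\ is_maximal_ideal P, P a, P b &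
      forall (E : lmodType R) (e : E), injective_hull_of_quotient P e ->
        pure_injective (ann2 E a b) /\ ~ RD_injective (ann2 E a b)].
Proof.
move=> nar; have [P [a [b [hP hab hba]]]] := not_arithmetic_incomparable nar.
exists P, a, b; split=> //; [exact: loc_ndvd_mem hab | exact: loc_ndvd_mem hba |].
move=> E e [hE ann_e _]; split; first exact: pure_injective_ann2.
exact: (not_RD_injective_ann2 hP hab hba hE ann_e).
Qed.
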